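(* Let $\mathcal P$ be a CPOS $2n$-gon, let $i,j$ be indices with $j\notin\{i-1,i,i+n-1,i+n\}$ (mod $2n$), and let $\lambda_0\in\mathbb R$ be such that $f_i(\lambda_0)\neq0$, the vertex $P_i(\lambda_0)$ lies in the relative interior of the edge $[P_j(\lambda_0),P_{j+1}(\lambda_0)]$ of $\mathcal P_{\lambda_0}$, and this crossing is transversal, i.e. $\lambda\mapsto[P_i(\lambda)-P_j(\lambda),e(j+\tfrac12)(\lambda)]$ has nonzero derivative at $\lambda_0$. For $\lambda$ near $\lambda_0$ let $\Gamma_-(\lambda)$ (resp. $\Gamma_+(\lambda)$) be the intersection of the segment $[P_j(\lambda),P_{j+1}(\lambda)]$ with $[P_{i-1}(\lambda),P_i(\lambda)]$ (resp. $[P_i(\lambda),P_{i+1}(\lambda)]$); these are the two branches of the equidistant symmetry set meeting at the vertex $P_i(\lambda_0)$. Then, for some $\epsilon>0$, all points of $\bigcup_{0<|\lambda-\lambda_0|<\epsilon}(\Gamma_-(\lambda)\cup\Gamma_+(\lambda))$ lie in one and the same open half-plane bounded by the great diagonal $d_i$ (the vertex is a cusp of the equidistant symmetry set) if and only if $f_i(\lambda_0)<0$, i.e. if and only if $P_i(\lambda_0)$ belongs to the central symmetry set.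
   Context: A CPOS $2n$-gon ($n\ge2$) is a closed planar polygon $\mathcal P$ with vertices $P_1,\dots,P_{2n}$ (indices mod $2n$) bounding a convex region, with no two adjacent sides parallel, with $P_{i+n+1}-P_{i+n}$ parallel to $P_{i+1}-P_i$ for all $i$, and positively oriented: $[P_{i+1}-P_i,P_{j+1}-P_j]>0$ for $1\le i<j\le n$ ($[\cdot,\cdot]$ = determinant). $d_i$ is the line through $P_i,P_{i+n}$; $D(i+\tfrac12)=d_i\cap d_{i+1}$; the central symmetry set is the closed polygon with vertices $D(1+\frac12),\dots,D(n+\frac12)$. The equidistant of level $\lambda\in\mathbb R$ is the polygon $\mathcal P_\lambda$ with vertices $P_i(\lambda)=P_i+\lambda(P_{i+n}-P_i)$ and edge vectors $e(i+\tfrac12)(\lambda)=P_{i+1}(\lambda)-P_i(\lambda)$; $f_i(\lambda)=[e(i-\tfrac12)(\lambda),e(i+\tfrac12)(\lambda)]$. The equidistant symmetry set is the set of self-intersection points of the equidistants $\mathcal P_\lambda$, $\lambda\in\mathbb R$ (points lying on two non-adjacent edges of the same $\mathcal P_\lambda$). *)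

From Stdlib Require Import Reals Lra Lia ZArith.
Open Scope R_scope.

Definition pt := (R * R)%type.

Definition padd (a b : pt) : pt := (fst a + fst b, snd a + snd b).
Definition psub (a b : pt) : pt := (fst a - fst b, snd a - snd b).
Definition pscale (t : R) (a : pt) : pt := (t * fst a, t * snd a).

Definition cross (a b : pt) : R := fst a * snd b - snd a * fst b.

(* A polygon is a map P : Z -> pt, vertices indexed mod 2n (periodicity is part of is_CPOS). *)
Definition edge (P : Z -> pt) (k : Z) : pt := psub (P (k + 1)%Z) (P k).

Definition is_CPOS (n : nat) (P : Z -> pt) : Prop :=
  (2 <= n)%nat /\
  (forall k : Z, P (k + 2 * Z.of_nat n)%Z = P k) /\
  (* bounds a convex region (positively oriented): every vertex lies weakly to the
     left of every edge line *)
  (forall k m : Z, 0 <= cross (edge P k) (psub (P m) (P k))) /\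
  (forall k : Z, cross (edge P (k - 1)%Z) (edge P k) <> 0) /\
  (forall k : Z, cross (edge P (k + Z.of_nat n)%Z) (edge P k) = 0) /\
  (* positively oriented *)
  (forall a b : Z, (1 <= a)%Z -> (a < b)%Z -> (b <= Z.of_nat n)%Z ->
     0 < cross (edge P a) (edge P b)).

Definition Peq (n : nat) (P : Z -> pt) (k : Z) (l : R) : pt :=
  padd (P k) (pscale l (psub (P (k + Z.of_nat n)%Z) (P k))).

Definition eeq (n : nat) (P : Z -> pt) (k : Z) (l : R) : pt :=
  psub (Peq n P (k + 1)%Z l) (Peq n P k l).

Definition feq (n : nat) (P : Z -> pt) (k : Z) (l : R) : R :=
  cross (eeq n P (k - 1)%Z l) (eeq n P k l).

Definition in_seg (a b x : pt) : Prop :=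
  exists t : R, 0 <= t <= 1 /\ x = padd a (pscale t (psub b a)).

Definition in_open_seg (a b x : pt) : Prop :=
  exists t : R, 0 < t < 1 /\ x = padd a (pscale t (psub b a)).

Definition idx_eq (n : nat) (a b : Z) : Prop :=
  Z.modulo (a - b) (2 * Z.of_nat n) = 0%Z.

Definition Gamma_minus (n : nat) (P : Z -> pt) (i j : Z) (l : R) (x : pt) : Prop :=
  in_seg (Peq n P j l) (Peq n P (j + 1)%Z l) x /\
  in_seg (Peq n P (i - 1)%Z l) (Peq n P i l) x.

Definition Gamma_plus (n : nat) (P : Z -> pt) (i j : Z) (l : R) (x : pt) : Prop :=
  in_seg (Peq n P j l) (Peq n P (j + 1)%Z l) x /\
  in_seg (Peq n P i l) (Peq n P (i + 1)%Z l) x.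

(* open half-plane bounded by the great diagonal d_i (line through P_i, P_{i+n}),
   side selected by the sign s in {1,-1} *)
Definition in_open_halfplane_di (n : nat) (P : Z -> pt) (i : Z) (s : R) (x : pt) : Prop :=
  0 < s * cross (psub (P (i + Z.of_nat n)%Z) (P i)) (psub x (P i)).

From Stdlib Require Import Reals ZArith Lra Lia Psatz.
Open Scope R_scope.

(* In a CPOS polygon opposite sides are antiparallel: edge (k+n) = c_k * edge k
   with c_k < 0.  Hence every edge of the equidistant P_lambda is a rescaled
   edge of P, e(k+1/2)(lambda) = a_k(lambda) * edge k with the affine factor
   a_k(lambda) = 1 - lambda + lambda c_k, and f_i = a_(i-1) a_i [e_(i-1), e_i]
   where [e_(i-1), e_i] > 0.  The vertex P_i(lambda) moves along the diagonal
   d_i, and the diagonal points into the polygon: [e_(i-1), D_i] > 0 and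
   [e_i, D_i] > 0 for D_i = P_(i+n) - P_i.  A point of the edge before
   P_i(lambda) therefore lies on the side sgn a_(i-1) of d_i, a point of the
   edge after it on the side -sgn a_i; both sides agree iff f_i < 0.
   Transversality of the crossing makes the gap between P_i(lambda) and the
   line of edge j a simple zero at lambda_0: near lambda_0 the vertex is off
   edge j (so branch points are strictly off d_i), and on a suitable side of
   lambda_0 each of the two edges at P_i(lambda) really crosses edge j, so both
   branches are nonempty arbitrarily close to lambda_0. *)

(** * Local behaviour of real functions *)

Definition near (x : R) (Q : R -> Prop) : Prop :=
  exists delta, 0 < delta /\ forall y, Rabs (y - x) < delta -> Q y.

Lemma near_and x (Q1 Q2 : R -> Prop) :
  near x Q1 -> near x Q2 -> near x (fun y => Q1 y /\ Q2 y).
Proof.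
  intros [d1 [Hd1 H1]] [d2 [Hd2 H2]].
  exists (Rmin d1 d2); split; [now apply Rmin_glb_lt|].
  intros y Hy; split.
  - apply H1. pose proof (Rmin_l d1 d2). lra.
  - apply H2. pose proof (Rmin_r d1 d2). lra.
Qed.

Lemma near_interval (f : R -> R) x a b :
  continuity_pt f x -> a < f x < b -> near x (fun y => a < f y < b).
Proof.
  intros Hc Hab.
  destruct (Hc (Rmin (f x - a) (b - f x))) as [alp [Halp H]].
  { apply Rmin_glb_lt; lra. }
  exists alp; split; [lra|]. intros y Hy.
  destruct (Req_dec y x) as [->|Hne]; [lra|].
  assert (Hd := H y (conj (conj I (not_eq_sym Hne)) Hy)).
  simpl in Hd. unfold R_dist in Hd. apply Rabs_def2 in Hd.
  pose proof (Rmin_l (f x - a) (b - f x)). pose proof (Rmin_r (f x - a) (b - f x)).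
  lra.
Qed.

Lemma near_sign (f : R -> R) x :
  continuity_pt f x -> f x <> 0 -> near x (fun y => 0 < f y * f x).
Proof.
  intros Hc Hf.
  destruct (Rlt_or_le 0 (f x)) as [Hp|Hn].
  - destruct (near_interval f x 0 (f x + 1) Hc) as [d [Hd H]]; [lra|].
    exists d; split; auto. intros y Hy. specialize (H y Hy). nra.
  - destruct (near_interval f x (f x - 1) 0 Hc) as [d [Hd H]]; [lra|].
    exists d; split; auto. intros y Hy. specialize (H y Hy). nra.
Qed.

Lemma near_simple_zero (g : R -> R) x d :
  derivable_pt_lim g x d -> d <> 0 -> g x = 0 ->
  near x (fun y => y <> x -> 0 < g y * (y - x) * d).
Proof.
  intros Hg Hd Hg0.
  destruct (Hg (Rabs d) (Rabs_pos_lt d Hd)) as [[delta Hdelta] H].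
  exists delta; split; auto. intros y Hy Hyx.
  assert (Hh : y - x <> 0) by lra.
  specialize (H (y - x) Hh Hy). simpl in H.
  replace (x + (y - x)) with y in H by ring. rewrite Hg0, Rminus_0_r in H.
  set (q := g y / (y - x)) in H.
  assert (Hq : 0 < q * d).
  { apply Rabs_def2 in H.
    destruct (Rcase_abs d) as [Hn|Hp];
      [rewrite Rabs_left in H | rewrite Rabs_right in H]; auto; nra. }
  replace (g y * (y - x) * d) with (q * d * ((y - x) * (y - x))) by (unfold q; field; auto).
  apply Rmult_lt_0_compat; [exact Hq | nra].
Qed.

Lemma positive_triple s t e k : 0 < t -> 0 < s * e -> 0 < k -> 0 < s * (t * (e * k)).
Proof.
  intros Ht Hse Hk. replace (s * (t * (e * k))) with (t * (s * e) * k) by ring.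
  apply Rmult_lt_0_compat; [apply Rmult_lt_0_compat|]; assumption.
Qed.

Lemma sign_of_triple s t e k : 0 <= t -> 0 < k -> 0 < s * (t * (e * k)) -> 0 < s * e.
Proof.
  intros Ht Hk H. replace (s * (t * (e * k))) with ((s * e) * (t * k)) in H by ring.
  destruct (Rlt_or_le 0 (s * e)) as [Hp|Hn]; [exact Hp|].
  assert (0 <= t * k) by nra. nra.
Qed.

Lemma unit_sign a : a <> 0 -> exists s, (s = 1 \/ s = -1) /\ 0 < s * a.
Proof.
  intros Ha. destruct (Rlt_or_le 0 a).
  - exists 1; split; [now left | lra].
  - exists (-1); split; [now right | lra].
Qed.

Lemma near_point_on_side x (Q : R -> Prop) delta s :
  near x Q -> 0 < delta -> (s = 1 \/ s = -1) ->
  exists y, 0 < Rabs (y - x) < delta /\ 0 < (y - x) * s /\ Q y.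
Proof.
  intros [d [Hd H]] Hdelta Hs.
  set (m := Rmin d delta / 2).
  assert (Hm : 0 < m /\ m < d /\ m < delta).
  { pose proof (Rmin_l d delta). pose proof (Rmin_r d delta).
    pose proof (Rmin_glb_lt d delta 0 Hd Hdelta). unfold m; lra. }
  assert (Habs : Rabs (s * m) = m).
  { destruct Hs as [-> | ->].
    - rewrite Rmult_1_l. apply Rabs_pos_eq. lra.
    - replace (-1 * m) with (- m) by ring. rewrite Rabs_Ropp. apply Rabs_pos_eq. lra. }
  exists (x + s * m). replace (x + s * m - x) with (s * m) by ring.
  rewrite Habs. repeat split; try lra.
  - destruct Hs as [-> | ->]; nra.
  - apply H. replace (x + s * m - x) with (s * m) by ring. rewrite Habs. lra.
Qed.

Lemma transversal_window (g r psi : R -> R) (Q : R -> Prop) x d delta :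
  derivable_pt_lim g x d -> d <> 0 -> g x = 0 ->
  continuity_pt r x -> r x <> 0 -> continuity_pt psi x -> 0 < psi x < 1 ->
  near x Q -> 0 < delta ->
  exists y, 0 < Rabs (y - x) < delta /\ 0 < g y * r y < 1 /\ 0 < psi y < 1 /\ Q y.
Proof.
  intros Hg Hd Hg0 Hr Hr0 Hpsi Hpsi0 HQ Hdelta.
  assert (Hgr : continuity_pt (fun y => g y * r y) x).
  { apply continuity_pt_mult; auto. apply derivable_continuous_pt. exists d; exact Hg. }
  assert (Hgr0 : -1 < g x * r x < 1) by (rewrite Hg0; lra).
  pose proof (near_and _ _ _ (near_simple_zero g x d Hg Hd Hg0)
               (near_and _ _ _ (near_sign r x Hr Hr0)
                 (near_and _ _ _ (near_interval _ x _ _ Hgr Hgr0)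
                   (near_and _ _ _ (near_interval psi x 0 1 Hpsi Hpsi0) HQ)))) as Hnear.
  destruct (unit_sign (d * r x)) as [s [Hs Hsdr]].
  { now apply Rmult_integral_contrapositive_currified. }
  destruct (near_point_on_side x _ delta s Hnear Hdelta Hs)
    as [y [Hy [Hys (Hgy & Hry & Hgry & Hpsiy & HQy)]]].
  exists y; repeat split; try tauto.
  assert (Hyx : y <> x) by (intro E; subst; rewrite Rminus_diag, Rabs_R0 in Hy; lra).
  specialize (Hgy Hyx).
  (* the product of the four positive quantities is (g y * r y) times a square *)
  assert (Hprod : 0 < (g y * r y) * ((y - x) * s * d * r x) * ((y - x) * s * d * r x)).
  { replace ((g y * r y) * ((y - x) * s * d * r x) * ((y - x) * s * d * r x))
      with ((g y * (y - x) * d) * (r y * r x) * ((y - x) * s) * (s * (d * r x)))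
      by (destruct Hs as [-> | ->]; ring).
    apply Rmult_lt_0_compat; [apply Rmult_lt_0_compat; [apply Rmult_lt_0_compat|]|];
      assumption. }
  destruct (Rlt_or_le 0 (g y * r y)) as [Hpos|Hnpos]; [exact Hpos|].
  pose proof (Rle_0_sqr ((y - x) * s * d * r x)). unfold Rsqr in *. nra.
Qed.

Lemma derivative_of_product_form (g : R -> R) x a b d :
  (forall y, g y = (a + b * (y - x)) * (y - x)) -> derivable_pt_lim g x d -> d = a.
Proof.
  intros Hform Hd.
  set (shift := minus_fct id (fct_cte x)).
  assert (Hshift : derivable_pt_lim shift x 1).
  { replace 1 with (1 - 0) by ring.
    apply derivable_pt_lim_minus; [apply derivable_pt_lim_id | apply derivable_pt_lim_const]. }
  assert (Hlin : derivable_pt_lim (plus_fct (fct_cte a) (mult_real_fct b shift)) x (0 + b * 1)).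
  { apply derivable_pt_lim_plus; [apply derivable_pt_lim_const | now apply derivable_pt_lim_scal]. }
  pose proof (derivable_pt_lim_mult _ _ x _ _ Hlin Hshift) as Hprod.
  apply (uniqueness_limite g x); [exact Hd|].
  apply derivable_pt_lim_ext
    with (f := mult_fct (plus_fct (fct_cte a) (mult_real_fct b shift)) shift).
  - intro y. rewrite Hform. reflexivity.
  - replace ((0 + b * 1) * shift x + plus_fct (fct_cte a) (mult_real_fct b shift) x * 1)
      with a in Hprod by (unfold shift, plus_fct, mult_real_fct, minus_fct, fct_cte, id; ring).
    exact Hprod.
Qed.

(** * Planar vector identities *)

Ltac coords :=
  repeat match goal with p : pt |- _ => destruct p end;
  unfold cross, psub, padd, pscale in *; simpl in *.

Lemma cross_scale_l c (u w : pt) : cross (pscale c u) w = c * cross u w.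
Proof. coords; ring. Qed.

Lemma cross_scale_r c (u w : pt) : cross u (pscale c w) = c * cross u w.
Proof. coords; ring. Qed.

Lemma pscale_1 (v : pt) : pscale 1 v = v.
Proof. coords; f_equal; ring. Qed.

Lemma pscale_pscale a b (v : pt) : pscale a (pscale b v) = pscale (a * b) v.
Proof. coords; f_equal; ring. Qed.

Lemma cross_self (u : pt) : cross u u = 0.
Proof. coords; ring. Qed.

Lemma cross_add_r (u v w : pt) : cross u (padd v w) = cross u v + cross u w.
Proof. coords; ring. Qed.

Lemma cross_anti (u w : pt) : cross u w = - cross w u.
Proof. coords; ring. Qed.

Lemma cross_psub_swap (a b w : pt) : cross (psub a b) w = - cross (psub b a) w.
Proof. coords; ring. Qed.

Lemma parallel_is_multiple (u a b : pt) :
  cross u a <> 0 -> cross b a = 0 -> exists c, b = pscale c a.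
Proof.
  destruct u as [u1 u2], a as [a1 a2], b as [b1 b2]; coords; intros Hu Hb.
  assert (Hn : a1 * a1 + a2 * a2 <> 0).
  { intro H. assert (a1 = 0) by nra. assert (a2 = 0) by nra. subst. apply Hu; ring. }
  exists ((b1 * a1 + b2 * a2) / (a1 * a1 + a2 * a2)).
  f_equal; field_simplify_eq; auto.
  - replace (b1 * a2 ^ 2) with (a2 * (b1 * a2 - b2 * a1) + a1 * b2 * a2) by ring.
    rewrite Hb; ring.
  - replace (b2 * a1 ^ 2) with (- a1 * (b1 * a2 - b2 * a1) + b1 * a1 * a2) by ring.
    rewrite Hb; ring.
Qed.

(* Intersection of the lines a + tau v and c + sigma w (Cramer's rule). *)
Lemma line_crossing (a v c w : pt) tau sigma :
  cross v w <> 0 ->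
  tau * cross v w = cross (psub c a) w -> sigma * cross v w = cross (psub c a) v ->
  padd a (pscale tau v) = padd c (pscale sigma w).
Proof.
  destruct a as [a1 a2], v as [v1 v2], c as [c1 c2], w as [w1 w2].
  intros Hvw Htau Hsig. coords.
  set (C := v1 * w2 - v2 * w1) in *.
  assert (E1 : a1 + tau * v1 = c1 + sigma * w1).
  { apply (Rmult_eq_reg_r C); auto.
    transitivity (a1 * C + v1 * (tau * C)); [ring|]. rewrite Htau.
    transitivity (c1 * C + w1 * (sigma * C)); [|ring]. rewrite Hsig. unfold C; ring. }
  assert (E2 : a2 + tau * v2 = c2 + sigma * w2).
  { apply (Rmult_eq_reg_r C); auto.
    transitivity (a2 * C + v2 * (tau * C)); [ring|]. rewrite Htau.
    transitivity (c2 * C + w2 * (sigma * C)); [|ring]. rewrite Hsig. unfold C; ring. }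
  now rewrite E1, E2.
Qed.

Lemma seg_start (a b : pt) : padd a (pscale 0 (psub b a)) = a.
Proof. coords; f_equal; ring. Qed.

Lemma seg_end (a b : pt) : padd a (pscale 1 (psub b a)) = b.
Proof. coords; f_equal; ring. Qed.

Lemma in_seg_sym (a b x : pt) : in_seg a b x -> in_seg b a x.
Proof. intros [t [Ht ->]]. exists (1 - t). split; [lra|]. coords. f_equal; ring. Qed.

Lemma in_seg_on_line (a b x : pt) : in_seg a b x -> cross (psub x a) (psub b a) = 0.
Proof. intros [t [_ ->]]. coords; ring. Qed.

Lemma side_of_segment_to_line (O Dv A B x : pt) l t :
  B = padd O (pscale l Dv) -> x = padd A (pscale t (psub B A)) ->
  cross Dv (psub x O) = (1 - t) * cross (psub B A) Dv.
Proof. intros -> ->. coords; ring. Qed.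

Lemma side_of_segment_from_line (O Dv A B x : pt) l t :
  A = padd O (pscale l Dv) -> x = padd A (pscale t (psub B A)) ->
  cross Dv (psub x O) = - t * cross (psub B A) Dv.
Proof. intros -> ->. coords; ring. Qed.

(* Algebraic core of the transversal speed: a point Q + s a e of a line moving
   with velocity Di, and the line itself moving with velocity Dj and
   direction rescaled to b e, are at "gap" b h [Di - Dj, e] after time h. *)
Lemma gap_expansion (Q e Di Dj : pt) s a b h :
  cross (psub (padd (padd Q (pscale s (pscale a e))) (pscale h Di)) (padd Q (pscale h Dj)))
        (pscale b e) = b * h * cross (psub Di Dj) e.
Proof. coords; ring. Qed.

(** * Structure of CPOS polygons *)

Definition diagonal (n : nat) (P : Z -> pt) (k : Z) : pt :=
  psub (P (k + Z.of_nat n)%Z) (P k).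

Section CPOS.
Variable n : nat.
Variable P : Z -> pt.
Hypothesis HP : is_CPOS n P.

Lemma left_turn k : 0 < cross (edge P k) (edge P (k + 1)).
Proof.
  destruct HP as (_ & _ & Hconv & Hadj & _ & _).
  pose proof (Hconv k (k + 2)%Z) as H1. pose proof (Hadj (k + 1)%Z) as H2.
  replace (k + 1 - 1)%Z with k in H2 by ring.
  assert (E : psub (P (k + 2)%Z) (P k) = padd (edge P k) (edge P (k + 1))).
  { unfold edge. replace (k + 1 + 1)%Z with (k + 2)%Z by ring. coords; f_equal; ring. }
  rewrite E, cross_add_r, cross_self, Rplus_0_l in H1. lra.
Qed.

Lemma left_turn_prev k : 0 < cross (edge P (k - 1)) (edge P k).
Proof. pose proof (left_turn (k - 1)) as H. now rewrite Z.sub_add in H. Qed.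

Lemma opposite_edge_multiple k : exists c, edge P (k + Z.of_nat n) = pscale c (edge P k).
Proof.
  destruct HP as (_ & _ & _ & Hadj & Hopp & _).
  apply (parallel_is_multiple (edge P (k - 1))); auto.
Qed.

Lemma opposite_coef_same_sign k c c' :
  edge P (k + Z.of_nat n) = pscale c (edge P k) ->
  edge P (k + 1 + Z.of_nat n) = pscale c' (edge P (k + 1)) -> 0 < c * c'.
Proof.
  intros H1 H2.
  pose proof (left_turn (k + Z.of_nat n)) as L.
  replace (k + Z.of_nat n + 1)%Z with (k + 1 + Z.of_nat n)%Z in L by ring.
  rewrite H1, H2, cross_scale_l, cross_scale_r in L.
  pose proof (left_turn k). nra.
Qed.

Lemma opposite_edges_antiparallel k :
  exists c, c < 0 /\ edge P (k + Z.of_nat n) = pscale c (edge P k).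
Proof.
  set (Neg := fun k => forall c, edge P (k + Z.of_nat n) = pscale c (edge P k) -> c < 0).
  assert (Hup : forall k, Neg k -> Neg (k + 1)%Z).
  { intros k' Hk c' Hc'. destruct (opposite_edge_multiple k') as [c Hc].
    pose proof (Hk c Hc). pose proof (opposite_coef_same_sign k' c c' Hc Hc'). nra. }
  assert (Hdown : forall k, Neg (k + 1)%Z -> Neg k).
  { intros k' Hk c Hc. destruct (opposite_edge_multiple (k' + 1)) as [c' Hc'].
    pose proof (Hk c' Hc'). pose proof (opposite_coef_same_sign k' c c' Hc Hc'). nra. }
  assert (Hone : Neg 1%Z).
  { intros c Hc. destruct HP as (Hn & _ & _ & _ & _ & Horient).
    pose proof (left_turn (Z.of_nat n)) as L.
    rewrite Z.add_comm, Hc, cross_scale_r in L.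
    assert (L2 : 0 < cross (edge P 1) (edge P (Z.of_nat n))) by (apply Horient; lia).
    rewrite cross_anti in L2. nra. }
  assert (Hall : forall k, Neg k).
  { apply Z.peano_ind.
    - now apply Hdown.
    - intros x Hx. rewrite <- Z.add_1_r. auto.
    - intros x Hx. apply Hdown. now replace (Z.pred x + 1)%Z with x by lia. }
  destruct (opposite_edge_multiple k) as [c Hc].
  exists c; split; [exact (Hall k c Hc) | exact Hc].
Qed.

Lemma diagonal_left_of_next_edge k : 0 < cross (edge P k) (diagonal n P k).
Proof.
  pose proof HP as (_ & _ & Hconv & _ & _ & _).
  pose proof (Hconv k (k + Z.of_nat n - 1)%Z) as H1.
  destruct (opposite_edges_antiparallel k) as [c [Hc Hce]].
  pose proof (left_turn_prev (k + Z.of_nat n)) as L.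
  rewrite Hce, cross_scale_r in L.
  assert (E : cross (edge P k) (psub (P (k + Z.of_nat n - 1)%Z) (P k)) =
     cross (edge P k) (diagonal n P k) + cross (edge P (k + Z.of_nat n - 1)) (edge P k)).
  { unfold edge, diagonal. replace (k + Z.of_nat n - 1 + 1)%Z with (k + Z.of_nat n)%Z by ring.
    coords; ring. }
  rewrite E in H1. nra.
Qed.

Lemma diagonal_left_of_prev_edge k : 0 < cross (edge P (k - 1)) (diagonal n P k).
Proof.
  pose proof HP as (_ & _ & Hconv & _ & _ & _).
  pose proof (Hconv (k - 1)%Z (k + Z.of_nat n + 1)%Z) as H1.
  destruct (opposite_edges_antiparallel (k - 1)) as [c [Hc Hce]].
  pose proof (left_turn (k - 1 + Z.of_nat n)) as L.
  replace (k - 1 + Z.of_nat n + 1)%Z with (k + Z.of_nat n)%Z in L by ring.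
  rewrite Hce, cross_scale_l in L.
  assert (E : cross (edge P (k - 1)) (psub (P (k + Z.of_nat n + 1)%Z) (P (k - 1)%Z)) =
     cross (edge P (k - 1)) (edge P (k + Z.of_nat n)) + cross (edge P (k - 1)) (diagonal n P k)).
  { unfold edge, diagonal. rewrite Z.sub_add. coords; ring. }
  rewrite E in H1. nra.
Qed.

Lemma edge_shift_multiple r q :
  exists mu, mu <> 0 /\ edge P (q * Z.of_nat n + r) = pscale mu (edge P r).
Proof.
  revert q. apply Z.peano_ind.
  - exists 1; split; [lra|]. simpl. now rewrite pscale_1.
  - intros q [mu [Hmu Hq]].
    destruct (opposite_edges_antiparallel (q * Z.of_nat n + r)) as [c [Hc Hce]].
    exists (c * mu); split; [apply Rmult_integral_contrapositive_currified; lra|].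
    replace (Z.succ q * Z.of_nat n + r)%Z with (q * Z.of_nat n + r + Z.of_nat n)%Z by lia.
    now rewrite Hce, Hq, pscale_pscale.
  - intros q [mu [Hmu Hq]].
    destruct (opposite_edges_antiparallel (Z.pred q * Z.of_nat n + r)) as [c [Hc Hce]].
    replace (Z.pred q * Z.of_nat n + r + Z.of_nat n)%Z with (q * Z.of_nat n + r)%Z in Hce by lia.
    exists (/ c * mu); split.
    + apply Rmult_integral_contrapositive_currified; [apply Rinv_neq_0_compat; lra | exact Hmu].
    + rewrite <- pscale_pscale, <- Hq, Hce, pscale_pscale, Rinv_l, pscale_1; [reflexivity | lra].
Qed.

Lemma edges_nonparallel a b :
  ~ (Z.divide (Z.of_nat n) (a - b)) -> cross (edge P a) (edge P b) <> 0.
Proof.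
  intros Hnd. pose proof HP as (Hn & _ & _ & _ & _ & Horient).
  assert (Hreduce : forall a, exists r q mu, (1 <= r <= Z.of_nat n)%Z /\
            a = (q * Z.of_nat n + r)%Z /\ mu <> 0 /\ edge P a = pscale mu (edge P r)).
  { intros a'. set (r := ((a' - 1) mod Z.of_nat n + 1)%Z). set (q := ((a' - 1) / Z.of_nat n)%Z).
    assert (Ha : a' = (q * Z.of_nat n + r)%Z)
      by (unfold q, r; pose proof (Z.div_mod (a' - 1) (Z.of_nat n)); lia).
    destruct (edge_shift_multiple r q) as [mu [Hmu He]].
    exists r, q, mu. repeat split; auto.
    - pose proof (Z.mod_pos_bound (a' - 1) (Z.of_nat n)). unfold r; lia.
    - pose proof (Z.mod_pos_bound (a' - 1) (Z.of_nat n)). unfold r; lia.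
    - now rewrite Ha at 1. }
  destruct (Hreduce a) as (ra & qa & mua & Hra & Ha & Hmua & Ea).
  destruct (Hreduce b) as (rb & qb & mub & Hrb & Hb & Hmub & Eb).
  rewrite Ea, Eb, cross_scale_l, cross_scale_r.
  assert (Hne : ra <> rb) by (intro E; apply Hnd; exists (qa - qb)%Z; lia).
  assert (cross (edge P ra) (edge P rb) <> 0).
  { destruct (Z.lt_gt_cases ra rb) as [[Hl|Hl] _]; auto.
    - pose proof (Horient ra rb ltac:(lia) Hl ltac:(lia)). lra.
    - pose proof (Horient rb ra ltac:(lia) ltac:(lia) ltac:(lia)). rewrite cross_anti. lra. }
  repeat apply Rmult_integral_contrapositive_currified; auto.
Qed.

End CPOS.

Lemma not_congruent_mod_n n a b :
  (1 <= n)%nat -> ~ idx_eq n a b -> ~ idx_eq n a (b + Z.of_nat n)%Z ->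
  ~ Z.divide (Z.of_nat n) (a - b).
Proof.
  intros Hn H1 H2 [m Hm]. unfold idx_eq in *.
  destruct (Z.Even_or_Odd m) as [[p Hp]|[p Hp]].
  - apply H1. replace (a - b)%Z with (p * (2 * Z.of_nat n))%Z by (rewrite Hm, Hp; ring).
    apply Z.mod_mul. lia.
  - apply H2. replace (a - (b + Z.of_nat n))%Z with (p * (2 * Z.of_nat n))%Z by lia.
    apply Z.mod_mul. lia.
Qed.

(** * Equidistants *)

(* The factor by which edge k is rescaled in the equidistant of level l, when
   edge (k+n) = c * edge k. *)
Definition eq_factor (c l : R) : R := 1 - l + l * c.

Lemma eq_factor_continuous c l : continuity_pt (eq_factor c) l.
Proof. unfold eq_factor. reg. Qed.

Lemma eq_factor_shift c l0 y : eq_factor c y = eq_factor c l0 + (c - 1) * (y - l0).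
Proof. unfold eq_factor. ring. Qed.

Lemma eeq_scaled n P k c l :
  edge P (k + Z.of_nat n) = pscale c (edge P k) ->
  eeq n P k l = pscale (eq_factor c l) (edge P k).
Proof.
  unfold eeq, Peq, edge, eq_factor.
  replace (k + 1 + Z.of_nat n)%Z with (k + Z.of_nat n + 1)%Z by ring.
  destruct (P k) as [a1 a2], (P (k + 1)%Z) as [b1 b2], (P (k + Z.of_nat n)%Z) as [c1 c2],
    (P (k + Z.of_nat n + 1)%Z) as [d1 d2].
  coords. intros He. injection He; intros E2 E1.
  f_equal; nra.
Qed.

Lemma eeq_prev n P k l : eeq n P (k - 1) l = psub (Peq n P k l) (Peq n P (k - 1) l).
Proof. unfold eeq. now rewrite Z.sub_add. Qed.

Lemma Peq_affine n P k x y :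
  Peq n P k y = padd (Peq n P k x) (pscale (y - x) (diagonal n P k)).
Proof. unfold Peq, diagonal. coords. f_equal; ring. Qed.

Lemma Peq_continuous_cross n P a b c e x :
  continuity_pt (fun l => cross (psub (Peq n P a l) (Peq n P b l))
                                (psub (Peq n P c l) (Peq n P e l))) x.
Proof. unfold cross, psub, Peq, padd, pscale; simpl. reg. Qed.

Definition diag_side n P i (x : pt) : R := cross (diagonal n P i) (psub x (P i)).

Lemma side_on_prev_edge n P i l x :
  in_seg (Peq n P (i - 1) l) (Peq n P i l) x ->
  exists t, 0 <= t <= 1 /\ (t = 0 -> x = Peq n P i l) /\
    diag_side n P i x = t * cross (eeq n P (i - 1) l) (diagonal n P i).
Proof.
  intros [t [Ht Hx]]. exists (1 - t). repeat split; try lra.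
  - intros E. replace t with 1 in Hx by lra. now rewrite Hx, seg_end.
  - unfold diag_side. rewrite eeq_prev.
    exact (side_of_segment_to_line _ _ _ _ _ l t eq_refl Hx).
Qed.

Lemma side_on_next_edge n P i l x :
  in_seg (Peq n P i l) (Peq n P (i + 1) l) x ->
  exists t, 0 <= t <= 1 /\ (t = 0 -> x = Peq n P i l) /\
    diag_side n P i x = - t * cross (eeq n P i l) (diagonal n P i).
Proof.
  intros [t [Ht Hx]]. exists t. repeat split; try lra.
  - intros ->. now rewrite Hx, seg_start.
  - exact (side_of_segment_from_line _ _ _ _ _ l t eq_refl Hx).
Qed.

Lemma eeq_cross n P a b ca cb l :
  edge P (a + Z.of_nat n) = pscale ca (edge P a) ->
  edge P (b + Z.of_nat n) = pscale cb (edge P b) ->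
  cross (eeq n P a l) (eeq n P b l) = eq_factor ca l * eq_factor cb l * cross (edge P a) (edge P b).
Proof.
  intros Ha Hb.
  rewrite (eeq_scaled n P a ca l Ha), (eeq_scaled n P b cb l Hb), cross_scale_l, cross_scale_r.
  ring.
Qed.

Lemma edge_diag_cross n P i k c l :
  edge P (k + Z.of_nat n) = pscale c (edge P k) ->
  cross (eeq n P k l) (diagonal n P i) = eq_factor c l * cross (edge P k) (diagonal n P i).
Proof. intros Hc. now rewrite (eeq_scaled n P k c l Hc), cross_scale_l. Qed.

(** * The vertex P_i(lambda) crossing edge j *)

Definition crossing_gap n P i j (l : R) : R :=
  cross (psub (Peq n P i l) (Peq n P j l)) (eeq n P j l).

Section Crossing.
Variable n : nat.
Variable P : Z -> pt.
Hypothesis HP : is_CPOS n P.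
Variables i j : Z.
Variables l0 d s0 : R.
Hypothesis Htransversal : derivable_pt_lim (crossing_gap n P i j) l0 d.
Hypothesis Hspeed : d <> 0.
Hypothesis Hs0 : 0 < s0 < 1.
Hypothesis Hvertex : Peq n P i l0 = padd (Peq n P j l0) (pscale s0 (eeq n P j l0)).

Lemma gap_zero : crossing_gap n P i j l0 = 0.
Proof.
  unfold crossing_gap. rewrite Hvertex.
  replace (psub (padd (Peq n P j l0) (pscale s0 (eeq n P j l0))) (Peq n P j l0))
    with (pscale s0 (eeq n P j l0)) by (coords; f_equal; ring).
  now rewrite cross_scale_l, cross_self, Rmult_0_r.
Qed.

Lemma vertex_off_edge_line :
  near l0 (fun l => l <> l0 -> crossing_gap n P i j l <> 0).
Proof.
  destruct (near_simple_zero _ l0 d Htransversal Hspeed gap_zero) as [delta [Hdelta H]].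
  exists delta; split; auto. intros l Hl Hll0 E.
  specialize (H l Hl Hll0). rewrite E in H. lra.
Qed.

(* The transversal speed is [D_i - D_j, edge j] times the scale of edge j at l0;
   in particular the edge j of P_(l0) is not degenerate. *)
Lemma edge_j_nondegenerate c3 :
  edge P (j + Z.of_nat n) = pscale c3 (edge P j) -> eq_factor c3 l0 <> 0.
Proof.
  intros Hc3.
  set (rho := cross (psub (diagonal n P i) (diagonal n P j)) (edge P j)).
  assert (Hd : d = eq_factor c3 l0 * rho).
  { apply (derivative_of_product_form (crossing_gap n P i j) l0 _ ((c3 - 1) * rho) d); [|exact Htransversal].
    intro y. unfold crossing_gap.
    rewrite (Peq_affine n P i l0 y), (Peq_affine n P j l0 y), Hvertex.
    rewrite (eeq_scaled n P j c3 y Hc3), (eeq_scaled n P j c3 l0 Hc3), gap_expansion.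
    rewrite (eq_factor_shift c3 l0 y). fold rho. ring. }
  intros E. apply Hspeed. rewrite Hd, E. ring.
Qed.

Lemma branch_crossing k (Q : R -> Prop) delta :
  cross (psub (Peq n P k l0) (Peq n P i l0)) (eeq n P j l0) <> 0 ->
  near l0 Q -> 0 < delta ->
  exists l x, 0 < Rabs (l - l0) < delta /\ Q l /\
    in_seg (Peq n P j l) (Peq n P (j + 1) l) x /\ in_seg (Peq n P i l) (Peq n P k l) x.
Proof.
  intros Hnonpar HQ Hdelta.
  set (det := fun l => cross (psub (Peq n P k l) (Peq n P i l)) (psub (Peq n P (j + 1) l) (Peq n P j l))).
  set (r := fun l => - / det l).
  set (sigma := fun l => cross (psub (Peq n P j l) (Peq n P i l))
                               (psub (Peq n P k l) (Peq n P i l)) / det l).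
  assert (Hdet : det l0 <> 0) by exact Hnonpar.
  assert (Hsigma0 : sigma l0 = s0).
  { unfold sigma. rewrite Hvertex at 1.
    change (det l0) with (cross (psub (Peq n P k l0) (Peq n P i l0)) (eeq n P j l0)).
    replace (psub (Peq n P j l0) (padd (Peq n P j l0) (pscale s0 (eeq n P j l0))))
      with (pscale (- s0) (eeq n P j l0)) by (coords; f_equal; ring).
    rewrite cross_scale_l, (cross_anti (eeq n P j l0)).
    field. exact Hnonpar. }
  destruct (transversal_window (crossing_gap n P i j) r sigma Q l0 d delta
              Htransversal Hspeed gap_zero) as [l (Hl & Htau & Hsig & HQl)]; auto.
  - apply continuity_pt_opp, continuity_pt_inv; [apply Peq_continuous_cross | exact Hdet].
  - unfold r. apply Ropp_neq_0_compat, Rinv_neq_0_compat, Hdet.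
  - apply continuity_pt_div; [apply Peq_continuous_cross | apply Peq_continuous_cross | exact Hdet].
  - rewrite Hsigma0; exact Hs0.
  - assert (Hdetl : det l <> 0).
    { intro E. unfold r in Htau. rewrite E, Rinv_0 in Htau. lra. }
    set (tau := crossing_gap n P i j l * r l) in Htau.
    assert (Hmeet : padd (Peq n P i l) (pscale tau (psub (Peq n P k l) (Peq n P i l))) =
                    padd (Peq n P j l) (pscale (sigma l) (psub (Peq n P (j + 1) l) (Peq n P j l)))).
    { apply line_crossing; [exact Hdetl| |].
      - change (cross (psub (Peq n P k l) (Peq n P i l)) (psub (Peq n P (j + 1) l) (Peq n P j l)))
          with (det l).
        unfold tau, r, crossing_gap, eeq.
        rewrite (cross_psub_swap (Peq n P i l) (Peq n P j l)). field. exact Hdetl.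
      - change (cross (psub (Peq n P k l) (Peq n P i l)) (psub (Peq n P (j + 1) l) (Peq n P j l)))
          with (det l).
        unfold sigma. field. exact Hdetl. }
    exists l, (padd (Peq n P i l) (pscale tau (psub (Peq n P k l) (Peq n P i l)))).
    split; [exact Hl|]. split; [exact HQl|]. split.
    + exists (sigma l). split; [lra | exact Hmeet].
    + exists tau. split; [lra | reflexivity].
Qed.

Lemma branch_minus_side c1 l x :
  edge P (i - 1 + Z.of_nat n) = pscale c1 (edge P (i - 1)) ->
  crossing_gap n P i j l <> 0 -> Gamma_minus n P i j l x ->
  exists t, 0 < t /\
    diag_side n P i x = t * (eq_factor c1 l * cross (edge P (i - 1)) (diagonal n P i)).
Proof.
  intros Hc1 Hgap [Hj Hi].
  destruct (side_on_prev_edge n P i l x Hi) as [t (Ht & Hvert & Hside)].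
  exists t; split.
  - destruct (Rle_lt_or_eq _ _ (proj1 Ht)) as [Hpos|E]; [exact Hpos|].
    exfalso. apply Hgap. rewrite (Hvert (eq_sym E)) in Hj. exact (in_seg_on_line _ _ _ Hj).
  - now rewrite Hside, (edge_diag_cross n P i (i - 1) c1 l Hc1).
Qed.

Lemma branch_plus_side c2 l x :
  edge P (i + Z.of_nat n) = pscale c2 (edge P i) ->
  crossing_gap n P i j l <> 0 -> Gamma_plus n P i j l x ->
  exists t, 0 < t /\
    diag_side n P i x = - t * (eq_factor c2 l * cross (edge P i) (diagonal n P i)).
Proof.
  intros Hc2 Hgap [Hj Hi].
  destruct (side_on_next_edge n P i l x Hi) as [t (Ht & Hvert & Hside)].
  exists t; split.
  - destruct (Rle_lt_or_eq _ _ (proj1 Ht)) as [Hpos|E]; [exact Hpos|].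
    exfalso. apply Hgap. rewrite (Hvert (eq_sym E)) in Hj. exact (in_seg_on_line _ _ _ Hj).
  - now rewrite Hside, (edge_diag_cross n P i i c2 l Hc2).
Qed.

Lemma cusp_of_negative_f :
  feq n P i l0 < 0 ->
  exists eps, 0 < eps /\ exists s, (s = 1 \/ s = -1) /\
    forall l x, 0 < Rabs (l - l0) < eps ->
      (Gamma_minus n P i j l x \/ Gamma_plus n P i j l x) ->
      in_open_halfplane_di n P i s x.
Proof.
  intros Hneg.
  destruct (opposite_edges_antiparallel n P HP (i - 1)) as [c1 [_ Hc1]].
  destruct (opposite_edges_antiparallel n P HP i) as [c2 [_ Hc2]].
  pose proof (diagonal_left_of_prev_edge n P HP i) as HK1.
  pose proof (diagonal_left_of_next_edge n P HP i) as HK2.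
  pose proof (left_turn_prev n P HP i) as Hturn.
  unfold feq in Hneg. rewrite (eeq_cross n P (i - 1) i c1 c2 l0 Hc1 Hc2) in Hneg.
  assert (Ha12 : eq_factor c1 l0 * eq_factor c2 l0 < 0) by nra.
  assert (Ha1 : eq_factor c1 l0 <> 0) by (intro E; rewrite E in Ha12; lra).
  assert (Ha2 : eq_factor c2 l0 <> 0) by (intro E; rewrite E in Ha12; lra).
  destruct (near_and _ _ _ vertex_off_edge_line
             (near_and _ _ _ (near_sign _ l0 (eq_factor_continuous c1 l0) Ha1)
                             (near_sign _ l0 (eq_factor_continuous c2 l0) Ha2)))
    as [eps [Heps Hnear]].
  destruct (unit_sign _ Ha1) as [s [Hs Hsa1]].
  exists eps; split; [exact Heps|]. exists s; split; [exact Hs|].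
  intros l x [Hl0 Hl] Hx. change (0 < s * diag_side n P i x).
  destruct (Hnear l Hl) as (Hgap & Hsign1 & Hsign2).
  assert (Hll0 : l <> l0) by (intro E; subst; rewrite Rminus_diag, Rabs_R0 in Hl0; lra).
  specialize (Hgap Hll0).
  assert (Hside1 : 0 < s * eq_factor c1 l) by (destruct Hs as [-> | ->]; nra).
  assert (Hside2 : 0 < - s * eq_factor c2 l) by (destruct Hs as [-> | ->]; nra).
  destruct Hx as [Hx|Hx].
  - destruct (branch_minus_side c1 l x Hc1 Hgap Hx) as [t [Ht ->]].
    now apply positive_triple.
  - destruct (branch_plus_side c2 l x Hc2 Hgap Hx) as [t [Ht ->]].
    replace (s * (- t * (eq_factor c2 l * cross (edge P i) (diagonal n P i))))
      with (- s * (t * (eq_factor c2 l * cross (edge P i) (diagonal n P i)))) by ring.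
    now apply positive_triple.
Qed.

Lemma gamma_minus_nonempty c1 c3 eps :
  edge P (i - 1 + Z.of_nat n) = pscale c1 (edge P (i - 1)) ->
  edge P (j + Z.of_nat n) = pscale c3 (edge P j) ->
  cross (edge P j) (edge P (i - 1)) <> 0 -> eq_factor c1 l0 <> 0 -> 0 < eps ->
  exists l x, 0 < Rabs (l - l0) < eps /\ 0 < eq_factor c1 l * eq_factor c1 l0 /\
    Gamma_minus n P i j l x.
Proof.
  intros Hc1 Hc3 Hpar Ha1 Heps.
  destruct (branch_crossing (i - 1) (fun y => 0 < eq_factor c1 y * eq_factor c1 l0) eps)
    as [l [x (Hl & Hsign & Hxj & Hxi)]];
    [| exact (near_sign _ l0 (eq_factor_continuous c1 l0) Ha1) | exact Heps |].
  - rewrite cross_psub_swap, <- eeq_prev, cross_anti, Ropp_involutive,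
      (eeq_cross n P j (i - 1) c3 c1 l0 Hc3 Hc1).
    pose proof (edge_j_nondegenerate c3 Hc3).
    repeat apply Rmult_integral_contrapositive_currified; assumption.
  - exists l, x. split; [exact Hl|]. split; [exact Hsign|].
    split; [exact Hxj | now apply in_seg_sym].
Qed.

Lemma gamma_plus_nonempty c2 c3 eps :
  edge P (i + Z.of_nat n) = pscale c2 (edge P i) ->
  edge P (j + Z.of_nat n) = pscale c3 (edge P j) ->
  cross (edge P j) (edge P i) <> 0 -> eq_factor c2 l0 <> 0 -> 0 < eps ->
  exists l x, 0 < Rabs (l - l0) < eps /\ 0 < eq_factor c2 l * eq_factor c2 l0 /\
    Gamma_plus n P i j l x.
Proof.
  intros Hc2 Hc3 Hpar Ha2 Heps.
  destruct (branch_crossing (i + 1) (fun y => 0 < eq_factor c2 y * eq_factor c2 l0) eps)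
    as [l [x (Hl & Hsign & Hxj & Hxi)]];
    [| exact (near_sign _ l0 (eq_factor_continuous c2 l0) Ha2) | exact Heps |].
  - change (cross (eeq n P i l0) (eeq n P j l0) <> 0).
    rewrite cross_anti, (eeq_cross n P j i c3 c2 l0 Hc3 Hc2).
    pose proof (edge_j_nondegenerate c3 Hc3).
    apply Ropp_neq_0_compat.
    repeat apply Rmult_integral_contrapositive_currified; assumption.
  - exists l, x. split; [exact Hl|]. split; [exact Hsign|]. split; assumption.
Qed.

Lemma side_sign_minus c1 l x s :
  edge P (i - 1 + Z.of_nat n) = pscale c1 (edge P (i - 1)) ->
  Gamma_minus n P i j l x -> 0 < s * diag_side n P i x -> 0 < s * eq_factor c1 l.
Proof.
  intros Hc1 [_ Hi] Hside.
  destruct (side_on_prev_edge n P i l x Hi) as [t (Ht & _ & E)].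
  rewrite E, (edge_diag_cross n P i (i - 1) c1 l Hc1) in Hside.
  apply (sign_of_triple s t _ _ (proj1 Ht) (diagonal_left_of_prev_edge n P HP i) Hside).
Qed.

Lemma side_sign_plus c2 l x s :
  edge P (i + Z.of_nat n) = pscale c2 (edge P i) ->
  Gamma_plus n P i j l x -> 0 < s * diag_side n P i x -> 0 < - s * eq_factor c2 l.
Proof.
  intros Hc2 [_ Hi] Hside.
  destruct (side_on_next_edge n P i l x Hi) as [t (Ht & _ & E)].
  rewrite E, (edge_diag_cross n P i i c2 l Hc2) in Hside.
  replace (s * (- t * (eq_factor c2 l * cross (edge P i) (diagonal n P i))))
    with (- s * (t * (eq_factor c2 l * cross (edge P i) (diagonal n P i)))) in Hside by ring.
  apply (sign_of_triple (- s) t _ _ (proj1 Ht) (diagonal_left_of_next_edge n P HP i) Hside).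
Qed.

Lemma no_cusp_of_positive_f :
  ~ Z.divide (Z.of_nat n) (j - (i - 1)) -> ~ Z.divide (Z.of_nat n) (j - i) ->
  0 < feq n P i l0 ->
  ~ (exists eps, 0 < eps /\ exists s, (s = 1 \/ s = -1) /\
      forall l x, 0 < Rabs (l - l0) < eps ->
        (Gamma_minus n P i j l x \/ Gamma_plus n P i j l x) ->
        in_open_halfplane_di n P i s x).
Proof.
  intros Hj1 Hj2 Hpos [eps [Heps [s [Hs Hcusp]]]].
  destruct (opposite_edges_antiparallel n P HP (i - 1)) as [c1 [_ Hc1]].
  destruct (opposite_edges_antiparallel n P HP i) as [c2 [_ Hc2]].
  destruct (opposite_edges_antiparallel n P HP j) as [c3 [_ Hc3]].
  pose proof (left_turn_prev n P HP i) as Hturn.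
  unfold feq in Hpos. rewrite (eeq_cross n P (i - 1) i c1 c2 l0 Hc1 Hc2) in Hpos.
  assert (Ha12 : 0 < eq_factor c1 l0 * eq_factor c2 l0) by nra.
  assert (Ha1 : eq_factor c1 l0 <> 0) by (intro E; rewrite E in Ha12; lra).
  assert (Ha2 : eq_factor c2 l0 <> 0) by (intro E; rewrite E in Ha12; lra).
  destruct (gamma_minus_nonempty c1 c3 eps Hc1 Hc3 (edges_nonparallel n P HP j (i - 1) Hj1) Ha1 Heps)
    as [l [x (Hl & Hsign1 & Hx)]].
  destruct (gamma_plus_nonempty c2 c3 eps Hc2 Hc3 (edges_nonparallel n P HP j i Hj2) Ha2 Heps)
    as [l' [y (Hl' & Hsign2 & Hy)]].
  pose proof (side_sign_minus c1 l x s Hc1 Hx (Hcusp l x Hl (or_introl Hx))) as Hside1.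
  pose proof (side_sign_plus c2 l' y s Hc2 Hy (Hcusp l' y Hl' (or_intror Hy))) as Hside2.
  (* s a_(i-1)(l0) > 0 and - s a_i(l0) > 0 contradict a_(i-1)(l0) a_i(l0) > 0 *)
  destruct Hs as [-> | ->]; nra.
Qed.

End Crossing.

Theorem mainTheorem7 (n : nat) (P : Z -> pt) (i j : Z) (l0 : R) :
  is_CPOS n P ->
  ~ idx_eq n j (i - 1)%Z -> ~ idx_eq n j i ->
  ~ idx_eq n j (i + Z.of_nat n - 1)%Z -> ~ idx_eq n j (i + Z.of_nat n)%Z ->
  feq n P i l0 <> 0 ->
  in_open_seg (Peq n P j l0) (Peq n P (j + 1)%Z l0) (Peq n P i l0) ->
  (exists d : R,
     derivable_pt_lim
       (fun l => cross (psub (Peq n P i l) (Peq n P j l)) (eeq n P j l)) l0 d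
     /\ d <> 0) ->
  ((exists eps : R, 0 < eps /\
     exists s : R, (s = 1 \/ s = -1) /\
       forall (l : R) (x : pt), 0 < Rabs (l - l0) < eps ->
         (Gamma_minus n P i j l x \/ Gamma_plus n P i j l x) ->
         in_open_halfplane_di n P i s x)
   <-> feq n P i l0 < 0).
Proof.
  intros HP Hj1 Hj2 Hj3 Hj4 Hf [s0 [Hs0 Hvertex]] [d [Htransversal Hspeed]].
  assert (Hn : (1 <= n)%nat) by (destruct HP; lia).
  (* edge j is parallel to neither edge at P_i *)
  assert (Hdiv1 : ~ Z.divide (Z.of_nat n) (j - (i - 1))).
  { apply not_congruent_mod_n; auto.
    now replace (i - 1 + Z.of_nat n)%Z with (i + Z.of_nat n - 1)%Z by ring. }
  assert (Hdiv2 : ~ Z.divide (Z.of_nat n) (j - i)) by (apply not_congruent_mod_n; auto).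
  split.
  - intros Hcusp.
    destruct (Rlt_or_le (feq n P i l0) 0) as [Hneg|Hnonneg]; [exact Hneg|].
    exfalso. apply (no_cusp_of_positive_f n P HP i j l0 d s0); auto. lra.
  - exact (cusp_of_negative_f n P HP i j l0 d s0 Htransversal Hspeed Hs0 Hvertex).
Qed.
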